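(* Let ${\bf u}\in\mathcal A^{\mathbb N}$ have its language closed under reversal and let $w$ be a palindromic factor of ${\bf u}$. If the graph $\Theta(w)$ is connected, then $m(w)\ge \#E^=(w)-1$; moreover $m(w)>\#E^=(w)-1$ if and only if $\Theta(w)$ contains a cycle, and $m(w)=\#E^=(w)-1$ if and only if $\Theta(w)$ is a tree.
   Context: The language of ${\bf u}$ (set of its finite factors) is closed under reversal if $w$ a factor implies its reversal $\widetilde w$ is a factor; $w$ is a palindrome if $w=\widetilde w$. For a factor $w$: $E^+(w)=\{b: wb\text{ factor}\}$, $E^-(w)=\{a: aw\text{ factor}\}$, $E(w)=\{(a,b): awb\text{ factor}\}$, $E^=(w)=\{a: awa\text{ factor}\}$, and $m(w)=\#E(w)-\#E^+(w)-\#E^-(w)+1$. For a palindromic factor $w$ (so $E^-(w)=E^+(w)$), $\Theta(w)$ is the simple graph with vertex set $E^+(w)$ and edges $\{a,b\}$ for $(a,b)\in E(w)$ with $a\ne b$. *)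

From HB Require Import structures.
From mathcomp Require Import all_boot all_order all_algebra.
From mathcomp Require Import boolp.
Set Implicit Arguments. Unset Strict Implicit. Unset Printing Implicit Defensive.
Import Order.TTheory GRing.Theory Num.Theory.

Section Words.
Variable A : finType.
Variable u : nat -> A.

Definition factor (w : seq A) : Prop :=
  exists i : nat, w = mkseq (fun k => u (i + k)) (size w).

Definition closed_under_reversal : Prop :=
  forall w : seq A, factor w -> factor (rev w).

Definition palindrome (w : seq A) : Prop := w = rev w.

Definition Eplus (w : seq A) : {set A} := [set b | `[< factor (rcons w b) >]].
Definition Eminus (w : seq A) : {set A} := [set a | `[< factor (a :: w) >]].
Definition Eboth (w : seq A) : {set A * A} :=
  [set p | `[< factor (p.1 :: rcons w p.2) >]].
Definition Eeq (w : seq A) : {set A} := [set a | `[< factor (a :: rcons w a) >]].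

Definition mult (w : seq A) : int :=
  (#|Eboth w|%:Z - #|Eplus w|%:Z - #|Eminus w|%:Z + 1)%R.

(* The simple graph Theta(w): vertex set E^+(w), edge {a,b} iff a <> b and
   (a,b) in E(w) (or (b,a) in E(w), as edges are unordered). *)
Definition theta_adj (w : seq A) : rel A :=
  fun a b => (a != b) && (((a, b) \in Eboth w) || ((b, a) \in Eboth w)).

Definition theta_connected (w : seq A) : Prop :=
  forall a b, a \in Eplus w -> b \in Eplus w -> connect (theta_adj w) a b.

Definition theta_has_cycle (w : seq A) : Prop :=
  exists s : seq A, [/\ 3 <= size s, uniq s & cycle (theta_adj w) s].

Definition theta_is_tree (w : seq A) : Prop :=
  theta_connected w /\ ~ theta_has_cycle w.

End Words.

From HB Require Import structures.
From mathcomp Require Import all_boot all_order all_algebra.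
From mathcomp Require Import boolp zify ring.
Import Order.TTheory GRing.Theory Num.Theory.
Set Implicit Arguments. Unset Strict Implicit. Unset Printing Implicit Defensive.

(* Closure under reversal and palindromicity of w make E(w) symmetric and give
   E^-(w) = E^+(w), so #E(w) = #E^=(w) + 2e where e is the number of edges of
   Theta(w); hence m(w) - (#E^=(w) - 1) = 2(e - v + 1) with v = #E^+(w).  For a
   connected graph e >= v - 1, with equality iff it has no cycle: a
   breadth-first spanning tree has exactly v - 1 edges, any other edge closes a
   cycle with a tree path, and on a cycle the vertex of greatest depth has two
   distinct cycle neighbours, which cannot both be its parent. *)

Definition has_cycle (T : finType) (r : rel T) : Prop :=
  exists s : seq T, [/\ 3 <= size s, uniq s & cycle r s].

Section Cycles.
Variables (T : finType) (r : rel T).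
Hypotheses (rsym : symmetric r) (rirr : irreflexive r).

Lemma cycle_neighbours s y : 3 <= size s -> uniq s -> cycle r s -> y \in s ->
  exists z z', [/\ z != z', z \in s, z' \in s, r y z & r y z'].
Proof.
move=> s3 us cs ys; have Hrot := rot_index ys.
move: (drop _ _ ++ take _ _) Hrot => t Hrot.
have ut : uniq (y :: t) by rewrite -Hrot rot_uniq.
have ct : cycle r (y :: t) by rewrite -Hrot rot_cycle.
have memt x : x \in t -> x \in s by move=> xt; rewrite -(mem_rot (index y s)) Hrot inE xt orbT.
have szt : size (y :: t) = size s by rewrite -Hrot size_rot.
clear Hrot; case: t ut ct memt szt => [|z [|z1 t]] ut ct memt szt; rewrite -szt // in s3.
move: ct; rewrite [cycle _ _]/= rcons_path => /and4P [ryz _ _ rz'y].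
have z'_in : last z1 t \in z1 :: t by exact: mem_last.
exists z, (last z1 t); split; rewrite 1?[r y (last _ _)]rsym //.
- by move: ut => /and3P [_ + _]; apply: contraNneq => ->.
- by apply: memt; rewrite mem_head.
- by apply: memt; rewrite inE z'_in orbT.
Qed.

Lemma cycle_of_edge_bypass a b :
  r a b -> connect [rel x y | [&& r x y, (x, y) != (a, b) & (x, y) != (b, a)]] a b ->
  has_cycle r.
Proof.
move=> rab /connectP [p /shortenP [p' pp' up' _ eb]].
have ab : a != b by apply: contraTneq rab => ->; rewrite rirr.
case: p' pp' up' eb => [|c [|c' q]] pp' up' eb; first by rewrite eb eqxx in ab.
  by move: eb pp' => /= ->; rewrite /= eqxx andbF.
exists [:: a, c, c' & q]; split => //.
change (path r a (rcons [:: c, c' & q] a)); rewrite rcons_path -eb rsym rab andbT.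
by apply: sub_path pp' => x y /andP [].
Qed.

End Cycles.

Section SpanningTree.
Variables (T : finType) (r : rel T) (V : {set T}) (root : T).
Hypotheses (rsym : symmetric r) (rirr : irreflexive r)
  (adj_mem : forall x y, r x y -> x \in V) (root_mem : root \in V)
  (connected : forall x, x \in V -> connect r x root).

Fixpoint within n x :=
  if n is m.+1 then within m x || [exists y, r x y && within m y] else x == root.

Lemma within_path p x : path r x p -> last x p = root -> within (size p) x.
Proof.
elim: p x => [|y p IHp] x /=; first by move=> _ ->.
case/andP=> rxy pp lastp; apply/orP; right; apply/existsP; exists y.
by rewrite rxy IHp.
Qed.

Lemma within_exists x : x \in V -> exists n, within n x.
Proof.
by move=> /connected /connectP [p pp lastp]; exists (size p); apply: within_path.
Qed.

Definition depth x :=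
  if pselect (exists n, within n x) is left H then ex_minn H else 0.

Lemma depthP x : x \in V -> within (depth x) x /\ forall n, within n x -> depth x <= n.
Proof.
move/within_exists => H; rewrite /depth; case: pselect => // H'.
by case: ex_minnP.
Qed.

Definition parent x := odflt x [pick y | r x y && within (depth x).-1 y].

Lemma parentP x : x \in V -> x != root ->
  [/\ r x (parent x), parent x \in V & depth (parent x) < depth x].
Proof.
move=> xV xroot; have [within_x depth_min] := depthP xV.
case Dx: (depth x) within_x => [|n] /=; first by rewrite (negbTE xroot).
case/orP => [/depth_min|/existsP [y /andP [rxy within_y]]]; first by rewrite Dx ltnn.
rewrite /parent Dx /=; case: pickP => [z /andP [rxz within_z]|/(_ y)]; last first.
  by rewrite rxy within_y.
have zV : z \in V by apply: (adj_mem (y := x)); rewrite rsym.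
by split=> //; have [_] := depthP zV; apply.
Qed.

Definition up_arcs := [set (x, parent x) | x in V :\ root].
Definition down_arcs := [set (parent x, x) | x in V :\ root].
Definition tree_arcs := up_arcs :|: down_arcs.
Definition arcs := [set q : T * T | r q.1 q.2].

Lemma up_arcsP a b : (a, b) \in up_arcs -> [/\ a \in V, a != root & b = parent a].
Proof. by case/imsetP => x; rewrite !inE => /andP [xroot xV] [-> ->]. Qed.

Lemma down_arcsP a b : (a, b) \in down_arcs -> [/\ b \in V, b != root & a = parent b].
Proof. by case/imsetP => x; rewrite !inE => /andP [xroot xV] [-> ->]. Qed.

Lemma tree_arcs_sym a b : ((a, b) \in tree_arcs) = ((b, a) \in tree_arcs).
Proof.
suff imp x y : (x, y) \in tree_arcs -> (y, x) \in tree_arcs by apply/idP/idP; apply: imp.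
rewrite !inE => /orP [/up_arcsP [xV xroot ->]|/down_arcsP [yV yroot ->]]; apply/orP.
  by right; apply/imsetP; exists x; rewrite // !inE xroot.
by left; apply/imsetP; exists y; rewrite // !inE yroot.
Qed.

Lemma tree_arcs_sub : tree_arcs \subset arcs.
Proof.
apply/subsetP => -[a b]; rewrite !inE /=.
case/orP => [/up_arcsP [aV aroot ->]|/down_arcsP [bV broot ->]].
  by case: (parentP aV aroot).
by rewrite rsym; case: (parentP bV broot).
Qed.

Lemma card_tree_arcs : #|tree_arcs| = 2 * (#|V| - 1).
Proof.
have card_up : #|up_arcs| = #|V :\ root| by apply: card_imset => x y [].
have card_down : #|down_arcs| = #|V :\ root| by apply: card_imset => x y [].
have card_V : #|V| = 1 + #|V :\ root| by rewrite (cardsD1 root V) root_mem.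
have up_down_disjoint : up_arcs :&: down_arcs = set0.
  apply/setP => -[a b]; rewrite !inE; apply/negP.
  case/andP => /up_arcsP [aV aroot eb] /down_arcsP [bV broot ea].
  have [_ _] := parentP aV aroot; have [_ _] := parentP bV broot.
  by rewrite -ea -eb => /ltn_trans h /h; rewrite ltnn.
have := cardsUI up_arcs down_arcs.
rewrite up_down_disjoint cards0 addn0 card_up card_down /tree_arcs => ->; lia.
Qed.

Lemma tree_arc_parent y z : (y, z) \in tree_arcs -> depth z <= depth y -> z = parent y.
Proof.
rewrite !inE => /orP [/up_arcsP [] //|/down_arcsP [zV zroot ->]].
by have [_ _ lt_pz] := parentP zV zroot; rewrite leqNgt lt_pz.
Qed.

Lemma cycle_nontree_arc : has_cycle r -> exists a b, r a b && ((a, b) \notin tree_arcs).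
Proof.
case=> -[|s0 s] [s3 us cs] //; have [y ys ymax] := arg_maxnP depth (mem_head s0 s).
have [z [z' [zz' zs z's ryz ryz']]] := cycle_neighbours rsym s3 us cs ys.
case Tz: ((y, z) \in tree_arcs); last by exists y, z; rewrite ryz Tz.
case Tz': ((y, z') \in tree_arcs); last by exists y, z'; rewrite ryz' Tz'.
move: zz'; rewrite (tree_arc_parent Tz (ymax _ zs)).
by rewrite (tree_arc_parent Tz' (ymax _ z's)) eqxx.
Qed.

Lemma connect_root (r' : rel T) x :
  (forall y, y \in V -> y != root -> r' y (parent y)) -> x \in V -> connect r' x root.
Proof.
move=> r'_parent; elim: {x}(depth x) {-2}x (leqnn (depth x)) => [|n IHn] x dx xV;
  (have [->|xroot] := eqVneq x root; first exact: connect0);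
  have [_ pV dp] := parentP xV xroot.
  by have := leq_trans dp dx; rewrite ltn0.
apply: connect_trans (connect1 (r'_parent _ xV xroot)) (IHn _ _ pV).
by rewrite -ltnS (leq_trans dp dx).
Qed.

Lemma nontree_arc_cycle a b : r a b -> (a, b) \notin tree_arcs -> has_cycle r.
Proof.
move=> rab nab; apply: (cycle_of_edge_bypass rsym rirr rab).
set r' := [rel x y | _]; have r'sym : symmetric r'.
  move=> x y /=; rewrite rsym !xpair_eqE.
  by case: (x == a); case: (x == b); case: (y == a); case: (y == b); rewrite /= ?andbF.
have r'_parent y : y \in V -> y != root -> r' y (parent y).
  move=> yV yroot; have [ryp _ _] := parentP yV yroot.
  have Tup : (y, parent y) \in tree_arcs.
    by rewrite inE; apply/orP; left; apply/imsetP; exists y; rewrite ?inE ?yroot.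
  rewrite /= ryp /=; apply/andP; split; apply: (contraNneq _ nab) => e.
    by rewrite -e.
  by rewrite tree_arcs_sym -e.
have aV : a \in V := adj_mem rab.
have bV : b \in V by apply: (adj_mem (y := a)); rewrite rsym.
apply: connect_trans (connect_root r'_parent aV) _.
by rewrite (sym_connect_sym r'sym); apply: connect_root r'_parent bV.
Qed.

Lemma card_arcs_ge : 2 * (#|V| - 1) <= #|arcs|.
Proof. by rewrite -card_tree_arcs subset_leq_card // tree_arcs_sub. Qed.

Lemma card_arcs_cyclic : has_cycle r -> 2 * #|V| <= #|arcs|.
Proof.
case/cycle_nontree_arc => a [b /andP [rab nab]].
have ab : (a, b) != (b, a) by apply: contraTneq rab => -[->]; rewrite rirr.
have : [set (a, b); (b, a)] \subset arcs :\: tree_arcs.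
  apply/subsetP => q; rewrite in_set2 in_setD => /orP [] /eqP ->.
    by rewrite nab inE.
  by rewrite -tree_arcs_sym nab inE /= rsym.
move/subset_leq_card; rewrite cards2 ab cardsDS ?tree_arcs_sub // card_tree_arcs.
have : 0 < #|V| by apply/card_gt0P; exists root.
lia.
Qed.

Lemma card_arcs_acyclic : ~ has_cycle r -> #|arcs| = 2 * (#|V| - 1).
Proof.
move=> acyclic; apply/eqP; rewrite eqn_leq card_arcs_ge andbT -card_tree_arcs.
apply/subset_leq_card/subsetP => -[a b]; rewrite inE /= => rab.
by apply: contraT => nab; case: acyclic; apply: nontree_arc_cycle nab.
Qed.

End SpanningTree.

Section Factors.
Variables (A : finType) (u : nat -> A).

Lemma factor_behead c s : factor u (c :: s) -> factor u s.
Proof.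
case=> i /= [_ ->]; exists i.+1; rewrite size_map size_iota (iotaDl 1 0) -map_comp.
by apply: eq_map => k /=; rewrite addnA addn1.
Qed.

Lemma factor_extend s : factor u s -> exists c, factor u (rcons s c).
Proof.
by case=> i e; exists (u (i + size s)), i; rewrite size_rcons mkseqS -e.
Qed.

Lemma card_Eboth w :
  #|Eboth u w| = #|[set q in Eboth u w | q.1 != q.2]| + #|Eeq u w|.
Proof.
rewrite -(cardsID [set q : A * A | q.1 != q.2] (Eboth u w)) setIdE; congr (_ + _).
rewrite -(card_imset (mem (Eeq u w)) (f := fun a => (a, a))); last by move=> x y [].
apply: eq_card => -[a b]; rewrite !inE /=; apply/andP/imsetP.
  by case=> /negPn/eqP <- Eaa; exists a; rewrite // !inE.
by case=> x + [-> ->]; rewrite !inE eqxx.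
Qed.

Variable w : seq A.
Hypotheses (reversal_closed : closed_under_reversal u) (w_pal : palindrome w).

Lemma Eminus_palindrome : Eminus u w = Eplus u w.
Proof.
apply/setP => a; rewrite !inE; apply/asboolP/asboolP => /reversal_closed.
  by rewrite rev_cons -w_pal.
by rewrite rev_rcons -w_pal.
Qed.

Lemma Eboth_sym a b : ((a, b) \in Eboth u w) = ((b, a) \in Eboth u w).
Proof.
suff imp x y : (x, y) \in Eboth u w -> (y, x) \in Eboth u w by apply/idP/idP; apply: imp.
rewrite !inE /= => /asboolP /reversal_closed.
by rewrite rev_cons rev_rcons -w_pal => ?; apply/asboolP.
Qed.

Lemma theta_adj_sym : symmetric (theta_adj u w).
Proof. by move=> a b; rewrite /theta_adj eq_sym orbC. Qed.

Lemma theta_adj_irr : irreflexive (theta_adj u w).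
Proof. by move=> a; rewrite /theta_adj eqxx. Qed.

Lemma theta_adj_mem a b : theta_adj u w a b -> a \in Eplus u w.
Proof.
case/andP => _; rewrite -[(a, b) \in _]Eboth_sym orbb inE => /asboolP /= /factor_behead.
by rewrite inE => /asboolP.
Qed.

Lemma arcs_theta : arcs (theta_adj u w) = [set q in Eboth u w | q.1 != q.2].
Proof.
by apply/setP => -[a b]; rewrite !inE /theta_adj /= -[(b, a) \in _]Eboth_sym orbb andbC inE.
Qed.

Lemma mult_excess :
  (mult u w - (#|Eeq u w|%:Z - 1) =
     #|arcs (theta_adj u w)|%:Z - 2 * (#|Eplus u w|%:Z - 1))%R.
Proof. by rewrite /mult Eminus_palindrome card_Eboth arcs_theta PoszD; ring. Qed.

End Factors.

Theorem lemma15 (A : finType) (u : nat -> A) (w : seq A) :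
  closed_under_reversal u -> factor u w -> palindrome w ->
  theta_connected u w ->
  [/\ (mult u w >= #|Eeq u w|%:Z - 1)%R,
      (mult u w > #|Eeq u w|%:Z - 1)%R <-> theta_has_cycle u w
    & mult u w = (#|Eeq u w|%:Z - 1)%R <-> theta_is_tree u w].
Proof.
move=> reversal_closed w_factor w_pal connected.
have [c wc_factor] := factor_extend w_factor.
have c_mem : c \in Eplus u w by rewrite inE; apply/asboolP.
have Eplus_gt0 : 0 < #|Eplus u w| by apply/card_gt0P; exists c.
have conn x : x \in Eplus u w -> connect (theta_adj u w) x c by move=> ?; apply: connected.
have sym := theta_adj_sym u w; have irr := theta_adj_irr u w.
have mem := theta_adj_mem reversal_closed w_pal.
have ge := card_arcs_ge sym mem c_mem conn.
have cyclic := card_arcs_cyclic sym irr mem c_mem conn.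
have acyclic := card_arcs_acyclic sym irr mem c_mem conn.
have excess := mult_excess reversal_closed w_pal.
split; first lia.
  split=> [gt|/cyclic]; last lia.
  by case: (pselect (theta_has_cycle u w)) => // /acyclic; lia.
split=> [eq|[_ /acyclic]]; last lia.
by split=> // /cyclic; lia.
Qed.
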